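(* Let $G$ be a connected graph, $c\in V(G)$, and run the scan procedure at $c$ (with any processing order). If $e=cu_1$ and $f=cu_2$ are edges incident to $c$ with $(e,f)\in\beta_c$, then it is not the case that $e$ and $f$ span a unique square which is chordless and has a unique top vertex.
   Context: All graphs are finite, simple, undirected; $N(x)$ is the open neighborhood of $x$. For distinct edges $e=vu$, $f=vw$ sharing the vertex $v$, a square spanned by $e$ and $f$ is a 4-cycle $vuxw$ with $x\ne v$ adjacent to both $u$ and $w$; $x$ is its top vertex. The square is chordless if it is an induced 4-cycle, i.e. $uw\notin E$ and $vx\notin E$. The edges $e,f$ span a unique square if $|N(u)\cap N(w)|=2$ (exactly one top vertex exists). A top vertex $x$ is unique if $|N(x)\cap N(v)|=2$. Scan procedure at $c$: the vertices of $N(c)$ are called primal, and edges incident to $c$ primal edges. Maintain two sets $I$ (incidence list) and $A$ (absence list) of unordered pairs of primal edges, both initially empty, and for every non-primal vertex $w\ne c$ a record of at most two ''recorded primal neighbors'' (first and second), initially none. Process the neighbors $u$ of $c$ one by one in an arbitrary order, and for each such $u$ process its neighbors $w\neq c$ in an arbitrary order: (1) if $w\in N(c)$, add $\{cu,cw\}$ to $A$; (2) else, if $w$ has no recorded primal neighbor, record $u$ as its first primal neighbor; (3) else, if $w$ has exactly one recorded primal neighbor $v$, record $u$ as its second primal neighbor, and if $\{cu,cv\}\notin I$ add $\{cu,cv\}$ to $I$, otherwise add $\{cu,cv\}$ to $A$; (4) else ($w$ has recorded first and second primal neighbors $v_1,v_2$) add $\{cv_1,cv_2\},\{cv_1,cu\},\{cv_2,cu\}$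 to $A$ (the record is not changed). After the procedure, $\alpha_c$ is the symmetric relation on primal edges consisting of the pairs in $I$, $\beta_c$ the symmetric relation consisting of the pairs in $A$, and $\overline{\alpha}_c$ the set of pairs of primal edges not in $I$. *)

From mathcomp Require Import all_boot.
Set Implicit Arguments.
Unset Strict Implicit.
Unset Printing Implicit Defensive.

Definition simple_graph (T : finType) (adj : rel T) : Prop :=
  symmetric adj /\ irreflexive adj.

Definition connected_graph (T : finType) (adj : rel T) : Prop :=
  forall x y : T, connect adj x y.

Definition N (T : finType) (adj : rel T) (x : T) : {set T} := [set y | adj x y].

Definition unique_square (T : finType) (adj : rel T) (v u w : T) : Prop :=
  #|N adj u :&: N adj w| = 2.

Definition top_vertex (T : finType) (adj : rel T) (v u w x : T) : Prop :=
  [/\ x != v, adj u x & adj w x].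

Definition chordless_square (T : finType) (adj : rel T) (v u w x : T) : Prop :=
  ~~ adj u w /\ ~~ adj v x.

Definition unique_top (T : finType) (adj : rel T) (v x : T) : Prop :=
  #|N adj x :&: N adj v| = 2.

Definition unique_chordless_square_unique_top
    (T : finType) (adj : rel T) (v u w : T) : Prop :=
  [/\ adj v u, adj v w, u != w, unique_square adj v u w &
      exists x, [/\ top_vertex adj v u w x, chordless_square adj v u w x
                  & unique_top adj v x]].

(* A primal edge c u is represented by its endpoint u; an unordered pair of
   primal edges {c u, c v} is represented by the 2-set [set u; v]. *)
Record scan_state (T : finType) := ScanState {
  I_list : {set {set T}};
  A_list : {set {set T}};
  record : T -> seq T            (* recorded primal neighbours (at most two) *)
}.

(* Processing the neighbour w (<> c) of the primal vertex u. *)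
Definition scan_step (T : finType) (adj : rel T) (c u : T)
    (st : scan_state T) (w : T) : scan_state T :=
  let I := I_list st in
  let A := A_list st in
  let r := record st in
  if adj c w then ScanState I ([set u; w] |: A) r
  else match r w with
  | [::] => ScanState I A (fun y => if y == w then [:: u] else r y)
  | [:: v] =>
      let r' := fun y => if y == w then [:: v; u] else r y in
      if [set u; v] \in I then ScanState I ([set u; v] |: A) r'
      else ScanState ([set u; v] |: I) A r'
  | v1 :: v2 :: _ =>
      ScanState I ([set v1; v2] |: ([set v1; u] |: ([set v2; u] |: A))) r
  end.

Definition scan (T : finType) (adj : rel T) (c : T)
    (ordc : seq T) (ordn : T -> seq T) : scan_state T :=
  foldl (fun st u => foldl (scan_step adj c u) st (ordn u))
        (ScanState set0 set0 (fun _ => [::])) ordc.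

Definition valid_order (T : finType) (adj : rel T) (c : T)
    (ordc : seq T) (ordn : T -> seq T) : Prop :=
  perm_eq ordc (enum (N adj c)) /\
  forall u, u \in N adj c ->
    perm_eq (ordn u) (enum [set w | adj u w & w != c]).

Definition beta (T : finType) (adj : rel T) (c : T)
    (ordc : seq T) (ordn : T -> seq T) (u v : T) : bool :=
  [set u; v] \in A_list (scan adj c ordc ordn).

From mathcomp Require Import all_boot.

Set Implicit Arguments.
Unset Strict Implicit.
Unset Printing Implicit Defensive.

(* Suppose e = c u1 and f = c u2 span a unique chordless square
   c u1 x u2 whose top vertex x is unique.  Then
   - the only common neighbours of u1 and u2 are c and x, and
   - the only primal neighbours of x are u1 and u2.
   The pair {u1, u2} can enter the absence list A in three ways only:
   (1) u1 u2 is an edge, excluded by chordlessness;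
   (3) {u1, u2} is re-created at a vertex w while it is already in I; both
       the vertex that created it and w are common non-primal neighbours of
       u1, u2, hence both equal x, yet the record of x would then hold two
       entries and a single one at the same time;
   (4) w already records two primal neighbours and is reached a third time;
       the pair forces w = x, which would have three primal neighbours. *)

Lemma card2_set2 (T : finType) (S : {set T}) (a b : T) :
  #|S| = 2 -> a \in S -> b \in S -> a != b -> S = [set a; b].
Proof.
move=> S2 aS bS ab; apply/esym/eqP; rewrite eqEcard S2 cards2 ab leqnn andbT.
by apply/subsetP=> y; rewrite !inE => /orP[]/eqP->.
Qed.

Lemma set2_eq (T : finType) (a b a' b' : T) :
  a' != b' -> [set a; b] = [set a'; b'] ->
  (a = a' /\ b = b') \/ (a = b' /\ b = a').
Proof.
move=> ab' E.
have : a' \in [set a; b] by rewrite E set21.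
have : b' \in [set a; b] by rewrite E set22.
rewrite !inE => /orP[]/eqP eb /orP[]/eqP ea; subst;
  by [move: ab'; rewrite eqxx | right | left].
Qed.

Section ScanStep.

Variables (T : finType) (adj : rel T) (c u w : T) (st : scan_state T).

Let st' := scan_step adj c u st w.

Lemma record_scan_step (y : T) :
  record st' y =
    if [&& y == w, ~~ adj c w & size (record st w) < 2]
    then rcons (record st w) u else record st y.
Proof.
rewrite /st' /scan_step; case: ifP => cw /=; first by rewrite andbF.
case E: (record st w) => [|v [|v2 s]] /=; rewrite ?andbT ?andbF //.
by case: ifP.
Qed.

Lemma record_scan_step_other (y : T) :
  y != w -> record st' y = record st y.
Proof. by rewrite record_scan_step => /negbTE->. Qed.

Lemma record_scan_step_sub (y : T) :
  {subset record st' y <= u :: record st y}.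
Proof.
move=> v; rewrite record_scan_step inE.
case: ifP => [/and3P[/eqP-> _ _]|_]; last by move->; rewrite orbT.
by rewrite mem_rcons inE.
Qed.

Lemma I_scan_step (p : {set T}) :
  p \in I_list st' -> p \in I_list st \/
    exists v, [/\ ~~ adj c w, record st w = [:: v] & p = [set u; v]].
Proof.
rewrite /st' /scan_step; case: ifP => cw; first by left.
case E: (record st w) => [|v [|v2 s]] /=; try by left.
case: ifP => _ /=; first by left.
by case/setU1P => [->|]; [right; exists v | left].
Qed.

Lemma A_scan_step (p : {set T}) :
  p \in A_list st' -> p \in A_list st \/
    [\/ adj c w /\ p = [set u; w],
        exists v, [/\ record st w = [:: v], p = [set u; v] & p \in I_list st]
      | exists v1 v2 s, record st w = [:: v1, v2 & s] /\
          p \in [set [set v1; v2]; [set v1; u]; [set v2; u]]].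
Proof.
rewrite /st' /scan_step; case: ifP => cw.
  by case/setU1P => [->|]; [right; apply: Or31 | left].
case E: (record st w) => [|v [|v2 s]] /=; try by left.
  case: ifP => vI /=; last by left.
  by case/setU1P => [->|]; [right; apply: Or32; exists v | left].
rewrite !setUA; case/setUP => [pp|]; last by left.
by right; apply: Or33; exists v, v2, s; rewrite !inE; rewrite !inE in pp.
Qed.

End ScanStep.

Section ScanInvariant.

Variables (T : finType) (adj : rel T) (c : T).

Definition scan_wf (st : scan_state T) : Prop :=
  [/\ forall y v, v \in record st y -> [/\ adj c v, adj v y & y != c],
      forall p, p \in I_list st -> exists y a b s,
        record st y = [:: a, b & s] /\ p = [set a; b]
    & forall y, uniq (record st y)].

Lemma scan_wf_init : scan_wf (ScanState set0 set0 (fun _ => [::])).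
Proof. by split=> // p; rewrite inE. Qed.

Lemma scan_step_wf (st : scan_state T) (u w : T) :
  scan_wf st -> adj c u -> adj u w -> w != c -> u \notin record st w ->
  scan_wf (scan_step adj c u st w).
Proof.
move=> [sound inI urec] cu uw wc uw_new; split.
- move=> y v; rewrite record_scan_step.
  case: ifP => [/and3P[/eqP-> _ _]|_]; last exact: sound.
  by rewrite mem_rcons inE => /orP[/eqP->|/sound].
- move=> p /I_scan_step[/inI[y [a [b [s [Ey ->]]]]]|[v [cw Ew ->]]].
    exists y, a, b, s; rewrite record_scan_step.
    by case: ifP => [/and3P[/eqP ey _]|_]; rewrite ?ey -?ey Ey.
  exists w, v, u, [::]; rewrite record_scan_step Ew eqxx cw /=.
  by split; [|rewrite setUC].
- move=> y; rewrite record_scan_step.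
  by case: ifP => _; rewrite ?rcons_uniq ?uw_new ?urec.
Qed.

Variables (P : scan_state T -> Prop) (ordn : T -> seq T).

Hypothesis P_step : forall st u w, scan_wf st -> P st ->
  adj c u -> adj u w -> w != c -> u \notin record st w ->
  P (scan_step adj c u st w).

(* Processing the neighbours L of the primal vertex u: each w \in L is met
   once, so u is never recorded twice; records only gain u. *)
Lemma scan_inner (u : T) (L : seq T) (st : scan_state T) :
  adj c u -> uniq L -> (forall w, w \in L -> adj u w /\ w != c) ->
  (forall y, y \in L -> u \notin record st y) -> scan_wf st -> P st ->
  let st' := foldl (scan_step adj c u) st L in
  [/\ scan_wf st', P st' & forall y, {subset record st' y <= u :: record st y}].
Proof.
elim: L st => [|w L IH] st cu /=.
  by move=> *; split=> // y v vy; rewrite inE vy orbT.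
case/andP=> wL uL nbrs fresh wf Pst.
have [uw wc] := nbrs w (mem_head _ _).
have uw_new := fresh w (mem_head _ _).
have fresh' y : y \in L -> u \notin record (scan_step adj c u st w) y.
  move=> yL; rewrite record_scan_step_other; first by apply: fresh; rewrite inE yL orbT.
  by apply: contraNneq wL => <-.
have [wf' P' sub] := IH _ cu uL (fun w' h => nbrs w' (@mem_behead _ (w :: L) _ h)) fresh'
  (scan_step_wf wf cu uw wc uw_new) (P_step wf Pst cu uw wc uw_new).
split=> // y v /sub; rewrite inE => /predU1P[->|/record_scan_step_sub//].
exact: mem_head.
Qed.

Lemma scan_outer (R : seq T) (st : scan_state T) :
  uniq R -> (forall u, u \in R -> adj c u) ->
  (forall u, u \in N adj c -> perm_eq (ordn u) (enum [set w | adj u w & w != c])) ->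
  (forall y v, v \in record st y -> v \notin R) -> scan_wf st -> P st ->
  P (foldl (fun st u => foldl (scan_step adj c u) st (ordn u)) st R).
Proof.
elim: R st => [|u R IH] st //= /andP[uR uniqR] primal ordn_ok fresh wf Pst.
have cu := primal u (mem_head _ _).
have permu : perm_eq (ordn u) (enum [set w | adj u w & w != c]).
  by apply: ordn_ok; rewrite inE.
have uniq_nbrs : uniq (ordn u) by rewrite (perm_uniq permu) enum_uniq.
have nbrs w : w \in ordn u -> adj u w /\ w != c.
  by rewrite (perm_mem permu) mem_enum inE => /andP[].
have u_fresh y : y \in ordn u -> u \notin record st y.
  by move=> _; apply/negP => /fresh; rewrite mem_head.
have [wf' P' sub] := scan_inner cu uniq_nbrs nbrs u_fresh wf Pst.
apply: IH => // [u' u'R|y v /sub]; first by apply: primal; rewrite inE u'R orbT.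
rewrite inE => /predU1P[->//|/fresh]; by rewrite inE negb_or => /andP[].
Qed.

Lemma scan_invariant (ordc : seq T) :
  valid_order adj c ordc ordn -> P (ScanState set0 set0 (fun _ => [::])) ->
  P (scan adj c ordc ordn).
Proof.
move=> [permc ordn_ok] Pinit; apply: scan_outer => //.
- by rewrite (perm_uniq permc) enum_uniq.
- by move=> u; rewrite (perm_mem permc) mem_enum inE.
- exact: scan_wf_init.
Qed.

End ScanInvariant.

Section UniqueSquare.

Variables (T : finType) (adj : rel T) (c u1 u2 x : T).
Hypotheses (adj_sym : symmetric adj) (cu1 : adj c u1) (cu2 : adj c u2).

Lemma unique_square_common_nbrs :
  unique_square adj c u1 u2 -> top_vertex adj c u1 u2 x ->
  forall w, adj u1 w -> adj u2 w -> w != c -> w = x.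
Proof.
move=> sq [xc u1x u2x] w u1w u2w wc.
have cx : c \in N adj u1 :&: N adj u2 by rewrite !inE -!(adj_sym c) cu1 cu2.
have xx : x \in N adj u1 :&: N adj u2 by rewrite !inE u1x u2x.
have wx : w \in N adj u1 :&: N adj u2 by rewrite !inE u1w u2w.
move: wx; rewrite (card2_set2 sq cx xx); last by rewrite eq_sym.
by rewrite !inE (negbTE wc) => /eqP.
Qed.

Lemma unique_top_primal_nbrs :
  u1 != u2 -> adj u1 x -> adj u2 x -> unique_top adj c x ->
  forall v, adj c v -> adj v x -> v = u1 \/ v = u2.
Proof.
move=> u12 u1x u2x top v cv vx.
have u1N : u1 \in N adj x :&: N adj c by rewrite !inE -(adj_sym u1) u1x cu1.
have u2N : u2 \in N adj x :&: N adj c by rewrite !inE -(adj_sym u2) u2x cu2.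
have vN : v \in N adj x :&: N adj c by rewrite !inE -(adj_sym v) vx cv.
by move: vN; rewrite (card2_set2 top u1N u2N u12) !inE => /orP[]/eqP; auto.
Qed.

Hypotheses (u12 : u1 != u2) (nu12 : ~~ adj u1 u2).
Hypothesis common_nbrs : forall w, adj u1 w -> adj u2 w -> w != c -> w = x.
Hypothesis primal_nbrs : forall v, adj c v -> adj v x -> v = u1 \/ v = u2.

Lemma pair_common_nbr (a b w : T) :
  [set a; b] = [set u1; u2] -> adj a w -> adj b w -> w != c -> w = x.
Proof.
by case/(set2_eq u12) => -[-> ->] aw bw; [apply: common_nbrs | apply: common_nbrs].
Qed.

Lemma no_three_primal_nbrs (a b d : T) :
  uniq [:: a; b; d] -> adj c a -> adj c b -> adj c d ->
  adj a x -> adj b x -> adj d x -> False.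
Proof.
move=> abd ca cb cd ax bx dx.
move: abd; case: (primal_nbrs ca ax) => ->; case: (primal_nbrs cb bx) => ->;
  by case: (primal_nbrs cd dx) => ->; rewrite /= !inE ?eqxx ?orbT ?orTb ?andbF.
Qed.

Lemma forbidden_pair_step (st : scan_state T) (u w : T) :
  scan_wf adj c st -> [set u1; u2] \notin A_list st ->
  adj c u -> adj u w -> w != c -> u \notin record st w ->
  [set u1; u2] \notin A_list (scan_step adj c u st w).
Proof.
move=> [sound inI urec] qA cu uw wc uw_new.
apply/negP => /A_scan_step[qA'|[[_ Ep]|[v [Ew Ep qI]]|[v1 [v2 [s [Ew qin]]]]]].
- by rewrite qA' in qA.
- case/(set2_eq u12): (esym Ep) => -[e1 e2]; move: nu12; rewrite -e1 -e2.
    by rewrite uw.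
  by rewrite adj_sym uw.
- have /sound[_ vw _] : v \in record st w by rewrite Ew mem_head.
  have wx := pair_common_nbr (esym Ep) uw vw wc.
  have [y [a [b [s [Ey Eab]]]]] := inI _ qI.
  have /sound[_ ay yc] : a \in record st y by rewrite Ey mem_head.
  have /sound[_ by' _] : b \in record st y by rewrite Ey !inE eqxx orbT.
  have yx := pair_common_nbr (esym Eab) ay by' yc.
  by move: Ey; rewrite yx -wx Ew.
- have /sound[cv1 v1w _] : v1 \in record st w by rewrite Ew mem_head.
  have /sound[cv2 v2w _] : v2 \in record st w by rewrite Ew !inE eqxx orbT.
  have wx : w = x.
    move: qin; rewrite !inE => /orP[/orP[]|] /eqP/esym Ep.
    - exact: pair_common_nbr Ep v1w v2w wc.
    - exact: pair_common_nbr Ep v1w uw wc.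
    - exact: pair_common_nbr Ep v2w uw wc.
  subst w; apply: (no_three_primal_nbrs _ cv1 cv2 cu v1w v2w uw).
  have := urec x; move: uw_new; rewrite Ew /= !inE !negb_or.
  by case/and3P=> uv1 uv2 _ /and3P[/andP[-> _] _ _]; rewrite !(eq_sym _ u) uv1 uv2.
Qed.

End UniqueSquare.

Theorem mainTheorem3 (T : finType) (adj : rel T) (c : T)
    (ordc : seq T) (ordn : T -> seq T) (u1 u2 : T) :
  simple_graph adj ->
  connected_graph adj ->
  valid_order adj c ordc ordn ->
  adj c u1 -> adj c u2 ->
  beta adj c ordc ordn u1 u2 ->
  ~ unique_chordless_square_unique_top adj c u1 u2.
Proof.
move=> [adj_sym _] _ valid cu1 cu2 beta12
  [_ _ u12 sq [x [topx [nu12 _] topu]]].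
have [_ u1x u2x] := topx.
have common := unique_square_common_nbrs adj_sym cu1 cu2 sq topx.
have primal := unique_top_primal_nbrs adj_sym cu1 cu2 u12 u1x u2x topu.
have pair_not_init : [set u1; u2] \notin A_list (ScanState set0 set0 (fun _ => [::])).
  by rewrite inE.
have := scan_invariant (P := fun st => [set u1; u2] \notin A_list st)
  (forbidden_pair_step adj_sym u12 nu12 common primal) valid pair_not_init.
by rewrite -/(beta adj c ordc ordn u1 u2) beta12.
Qed.
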